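(* Let $N\ge 2$ and $1\le\tilde N\le N-1$ be integers. Let $\beta>0$ satisfy $(\beta+1)^{N-\tilde N-1}>\beta^{N-\tilde N+1}$, and suppose that, for all $x\in\mathcal{X}$, $$V_{\tilde N+1}^{\tilde N}(x)\le (\beta+1)\,V_{\tilde N}^{\tilde N}(x)\qquad\text{and}\qquad V_n^{\tilde N}(x)\le (\beta+1)\,l(x,\mu_n(x))\ \text{ for all } n\in\{\tilde N+1,\dots,N\}.$$ Set $$\alpha=1-\frac{\beta^{N-\tilde N+1}}{(\beta+1)^{N-\tilde N-1}}\in(0,1].$$ Then for every $x\in\mathcal{X}$, $$\alpha\, J_\infty^{N,\tilde N}(x)\le V_N^{\tilde N}(x).$$
   Context: Let $\mathcal{D}\subset\mathbb{R}^n$ and $\mathcal{U}\subset\mathbb{R}^m$ be compact, and let $f:\mathcal{D}\times\mathcal{U}\to\mathcal{D}$ define the discrete-time system $x(k+1)=f(x(k),u(k))$, with $f(0,0)=0$. The stage cost $l:\mathcal{D}\times\mathcal{U}\to[0,\infty)$ is positive definite with $l(0,0)=0$. The set $\mathcal{X}\subseteq\mathcal{D}$ is control invariant: for every $x\in\mathcal{X}$ there is $u\in\mathcal{U}$ with $f(x,u)\in\mathcal{X}$. For $x\in\mathcal{X}$ write $\mathcal{U}(x)=\{u\in\mathcal{U}: f(x,u)\in\mathcal{X}\}$. Fix integers $N$ and $\tilde N$ with $0\le\tilde N\le N-1$. Define value functions on $\mathcal{X}$ recursively (dynamic programming form of the MPC problem with prediction horizon $N$ in which the state constraint $x\in\mathcal{X}$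 is imposed only during the first $N-\tilde N$ steps, the last $\tilde N$ steps being unconstrained): - $V_0^{\tilde N}\equiv 0$. - For $n\in\{1,\dots,\tilde N\}$: $V_n^{\tilde N}(x)=\min_{u\in\mathcal{U}}\big[V_{n-1}^{\tilde N}(f(x,u))+l(x,u)\big]$, with $\mu_n(x)$ a minimizer. - For $n\in\{\tilde N+1,\dots,N\}$: $V_n^{\tilde N}(x)=\min_{u\in\mathcal{U}(x)}\big[V_{n-1}^{\tilde N}(f(x,u))+l(x,u)\big]$, with $\mu_n(x)$ a minimizer; in particular $f(x,\mu_n(x))\in\mathcal{X}$. All minima are assumed to be attained. The MPC closed loop applies the feedback $\mu_N$: given $x\in\mathcal{X}$, set $x(0)=x$ and $x(k+1)=f(x(k),\mu_N(x(k)))$. This trajectory remains in $\mathcal{X}$. The closed-loop infinite-horizon cost is $$J_\infty^{N,\tilde N}(x)=\sum_{k=0}^{\infty} l\big(x(k),\mu_N(x(k))\big).$$ *)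

From HB Require Import structures.
From mathcomp Require Import all_boot all_order all_algebra.
From mathcomp Require Import all_classical all_reals all_analysis.
Set Implicit Arguments. Unset Strict Implicit. Unset Printing Implicit Defensive.
Import Order.TTheory GRing.Theory Num.Theory.
Import numFieldNormedType.Exports.
Local Open Scope classical_set_scope.
Local Open Scope ring_scope.

Definition cl_traj (R : realType) (p q : nat)
  (f : 'rV[R]_p -> 'rV[R]_q -> 'rV[R]_p) (muN : 'rV[R]_p -> 'rV[R]_q)
  (x : 'rV[R]_p) (k : nat) : 'rV[R]_p :=
  iter k (fun y => f y (muN y)) x.

Definition J_inf (R : realType) (p q : nat)
  (f : 'rV[R]_p -> 'rV[R]_q -> 'rV[R]_p) (l : 'rV[R]_p -> 'rV[R]_q -> R)
  (muN : 'rV[R]_p -> 'rV[R]_q) (x : 'rV[R]_p) : \bar R :=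
  (\sum_(0 <= k <oo) (l (cl_traj f muN x k) (muN (cl_traj f muN x k)))%:E)%E.

From HB Require Import structures.
From mathcomp Require Import all_boot all_order all_algebra.
From mathcomp Require Import all_classical all_reals all_analysis.
From mathcomp Require Import zify lra.
Import Order.TTheory GRing.Theory Num.Theory.
Import numFieldNormedType.Exports.
Local Open Scope classical_set_scope.
Local Open Scope ring_scope.

(* Relaxed dynamic programming: the MPC value V_N decreases along the closed
   loop by at least alpha times the stage cost, and summing this decrease
   bounds alpha J_oo by V_N.  For the decrease, follow the optimal predicted
   trajectory z_N = y, z_(n-1) = f(z_n, mu_n(z_n)) down to the horizon Nt.
   The gap V_(n+1)(z_n) - V_n(z_n) does not grow as n increases (use mu_n as
   a suboptimal control for V_(n+1)), so it is at most beta V_Nt(z_Nt); and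
   V_n(z_n) <= (beta+1) l_n forces V_(n-1)(z_(n-1)) <= beta/(beta+1) V_n(z_n),
   so V_Nt(z_Nt) is geometrically small compared with l(y, mu_N y). *)

Lemma geometric_iterate_le (R : numDomainType) (a b : R) (u : nat -> R) m k :
  0 <= a -> 0 <= b ->
  (forall n, (m <= n < m + k)%N -> a * u n <= b * u n.+1) ->
  a ^+ k * u m <= b ^+ k * u (m + k)%N.
Proof.
move=> a0 b0; elim: k m => [|k IHk] m uab; first by rewrite !expr0 addn0.
have ab_m : a * u m <= b * u m.+1 by apply: uab; lia.
have IH : a ^+ k * u m.+1 <= b ^+ k * u (m.+1 + k)%N.
  by apply: IHk => n /andP[? ?]; apply: uab; lia.
rewrite exprSr -mulrA (le_trans (ler_wpM2l (exprn_ge0 _ a0) ab_m)) //.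
by rewrite mulrCA exprS -mulrA -addSnnS ler_wpM2l.
Qed.

Lemma nneseries_le_of_decrease (R : realType) (a : R) (v c : nat -> R) :
  0 <= a -> (forall k, 0 <= c k) -> (forall k, 0 <= v k) ->
  (forall k, v k.+1 <= v k - a * c k) ->
  (a%:E * \sum_(0 <= k <oo) (c k)%:E <= (v 0%N)%:E)%E.
Proof.
move=> a0 c0 v0 vdec.
have partial K : a * (\sum_(0 <= k < K) c k) + v K <= v 0%N.
  elim: K => [|K IH]; first by rewrite big_geq // mulr0 add0r.
  by rewrite big_nat_recr //= mulrDr; have := vdec K; lra.
rewrite -nneseriesZl; last by move=> k _; rewrite lee_fin.
apply: lime_le.
  by apply: is_cvg_nneseries => k _ _; rewrite -EFinM lee_fin mulr_ge0.
apply: nearW => K; under eq_bigr do rewrite -EFinM.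
rewrite sumEFin lee_fin -mulr_sumr.
by have := partial K; have := v0 K; lra.
Qed.

Section RelaxedDynamicProgramming.

Context {R : realFieldType} {T A : Type}.
Context {f : T -> A -> T} {l : T -> A -> R}.
Context {V : nat -> T -> R} {mu : nat -> T -> A}.
Context {D X : set T} {U : set A} {Nt N : nat}.

Hypothesis l_ge0 : forall x u, D x -> U u -> 0 <= l x u.
Hypothesis XD : X `<=` D.
Hypothesis fD : forall x u, D x -> U u -> D (f x u).
Hypothesis V0 : forall x, D x -> V 0%N x = 0.
Hypothesis bellman_unc : forall n x, (1 <= n <= Nt)%N -> D x ->
  [/\ U (mu n x),
      V n x = V n.-1 (f x (mu n x)) + l x (mu n x)
    & forall u, U u -> V n x <= V n.-1 (f x u) + l x u].
Hypothesis bellman_con : forall n x, (Nt < n <= N)%N -> X x ->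
  [/\ U (mu n x), X (f x (mu n x)),
      V n x = V n.-1 (f x (mu n x)) + l x (mu n x)
    & forall u, U u -> X (f x u) -> V n x <= V n.-1 (f x u) + l x u].

Lemma V_unc_ge0 n x : (n <= Nt)%N -> D x -> 0 <= V n x.
Proof.
elim: n x => [|n IHn] x nNt Dx; first by rewrite V0.
have [Umu -> _] := bellman_unc n.+1 x (ltac:(lia)) Dx.
by rewrite addr_ge0 ?l_ge0 //; apply: IHn; [lia | apply: fD].
Qed.

Lemma V_con_ge0 n x : (n <= N)%N -> X x -> 0 <= V n x.
Proof.
elim: n x => [|n IHn] x nN Xx; first by rewrite V0 //; apply: XD.
have [nNt | Ntn] := leqP n.+1 Nt; first by apply: V_unc_ge0 => //; apply: XD.
have [Umu Xfx -> _] := bellman_con n.+1 x (ltac:(lia)) Xx.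
by rewrite addr_ge0 ?l_ge0 //; [apply: IHn => //; lia | apply: XD].
Qed.

(* Indexed by time: the state at time k is reached with horizon N - k left. *)
Fixpoint opt_traj (y : T) (k : nat) : T :=
  if k is k'.+1 then f (opt_traj y k') (mu (N - k') (opt_traj y k'))
  else y.

Hypothesis NtN : (Nt < N)%N.

Lemma opt_traj_in y k : X y -> (k <= N - Nt)%N -> X (opt_traj y k).
Proof.
move=> Xy; elim: k => [|k IHk] kM //=.
by have [] := bellman_con (N - k) _ (ltac:(lia)) (IHk (ltac:(lia))).
Qed.

Lemma opt_trajS y n : (n < N)%N ->
  opt_traj y (N - n) =
  f (opt_traj y (N - n.+1)) (mu n.+1 (opt_traj y (N - n.+1))).
Proof.
move=> nN; have -> : (N - n = (N - n.+1).+1)%N by lia.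
by rewrite /= (_ : (N - (N - n.+1))%N = n.+1) //; lia.
Qed.

Context {y : T}.
Hypothesis Xy : X y.

Local Notation z n := (opt_traj y (N - n)).

Lemma z_in n : (Nt <= n)%N -> X (z n).
Proof. by move=> Ntn; apply: opt_traj_in => //; lia. Qed.

Lemma V_opt_traj n : (Nt <= n < N)%N ->
  V n.+1 (z n.+1) = V n (z n) + l (z n.+1) (mu n.+1 (z n.+1)).
Proof.
move=> /andP[Ntn nN]; rewrite (opt_trajS y n nN).
by have [_ _ -> _] := bellman_con n.+1 _ (ltac:(lia)) (z_in n.+1 (ltac:(lia))).
Qed.

Context {beta : R}.
Hypothesis V_Nt_step : forall x, X x -> V Nt.+1 x <= (beta + 1) * V Nt x.
Hypothesis V_le_stage : forall x n, X x -> (Nt < n <= N)%N ->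
  V n x <= (beta + 1) * l x (mu n x).

Lemma V_gap_le n : (Nt <= n < N)%N ->
  V n.+1 (z n) - V n (z n) <= beta * V Nt (z Nt).
Proof.
move=> /andP[Ntn nN]; rewrite -(subnKC Ntn) in nN *.
elim: (n - Nt)%N nN => [|i IHi] iN.
  by rewrite addn0; have := V_Nt_step _ (z_in Nt (leqnn Nt)); lra.
rewrite addnS in iN *; move: (Nt + i)%N (leq_addr i Nt) IHi iN => m Ntm IHm mN.
have Xz := z_in m.+1 (ltac:(lia)).
have [Umu Xf _ _] := bellman_con m.+1 (z m.+1) (ltac:(lia)) Xz.
have [_ _ _ V_sub] := bellman_con m.+2 (z m.+1) (ltac:(lia)) Xz.
have := V_sub _ Umu Xf; have := V_opt_traj m (ltac:(lia)).
have := IHm (ltac:(lia)).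
by rewrite -opt_trajS /=; [lra | lia].
Qed.

Lemma V_contract n : (Nt <= n < N)%N ->
  (beta + 1) * V n (z n) <= beta * V n.+1 (z n.+1).
Proof.
move=> /andP[Ntn nN].
have := V_le_stage _ n.+1 (z_in n.+1 (ltac:(lia))) (ltac:(lia)).
rewrite V_opt_traj 1?mulrDr ?mulrDl ?mul1r ?lerD2l; last lia.
lra.
Qed.

Lemma V_closed_loop_decrease : 0 < beta ->
  V N (f y (mu N y)) <=
  V N y - (1 - beta ^+ (N - Nt + 1) / (beta + 1) ^+ (N - Nt - 1)) * l y (mu N y).
Proof.
move=> beta_gt0; set M := (N - Nt)%N.
have zN : z N = y by rewrite subnn.
have z_pred : z N.-1 = f y (mu N y).
  by rewrite opt_trajS ?prednK ?zN //; lia.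
have gap := V_gap_le N.-1 (ltac:(lia)).
have step := V_opt_traj N.-1 (ltac:(lia)).
rewrite prednK ?zN ?z_pred in gap step; last by lia.
have decay : (beta + 1) ^+ M * V Nt (z Nt) <= beta ^+ M * V N y.
  have := @geometric_iterate_le _ (beta + 1) beta (fun n => V n (z n)) Nt M.
  rewrite (_ : Nt + M = N)%N ?zN; last by rewrite /M; lia.
  apply; [lra | lra | move=> n /andP[? ?]; apply: V_contract; lia].
have VN_le := V_le_stage y N Xy (ltac:(lia)).
have b1M1_gt0 : 0 < (beta + 1) ^+ (M - 1) by apply: exprn_gt0; lra.
have b1M : (beta + 1) ^+ M = (beta + 1) ^+ (M - 1) * (beta + 1).
  by rewrite -exprSr; congr (_ ^+ _); lia.
have bM_ge0 : 0 <= beta ^+ M by apply: exprn_ge0; lra.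
have V_Nt_le : V Nt (z Nt) <= beta ^+ M / (beta + 1) ^+ (M - 1) * l y (mu N y).
  rewrite mulrAC ler_pdivlMr // mulrC -(@ler_pM2r _ (beta + 1)); last lra.
  rewrite -mulrA mulrCA -b1M mulrC (le_trans decay) //.
  by rewrite -mulrA ler_wpM2l // mulrC.
have : beta * V Nt (z Nt) <=
    beta ^+ (M + 1) / (beta + 1) ^+ (M - 1) * l y (mu N y).
  rewrite addn1 exprS -!mulrA; apply: ler_wpM2l; first exact: ltW.
  by rewrite !mulrA.
lra.
Qed.

End RelaxedDynamicProgramming.

Theorem theorem1 (R : realType) (p q : nat)
  (D : set 'rV[R]_p) (U : set 'rV[R]_q)
  (f : 'rV[R]_p -> 'rV[R]_q -> 'rV[R]_p) (l : 'rV[R]_p -> 'rV[R]_q -> R)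
  (X : set 'rV[R]_p)
  (N Nt : nat) (V : nat -> 'rV[R]_p -> R) (mu : nat -> 'rV[R]_p -> 'rV[R]_q)
  (beta : R) :
  compact D -> compact U ->
  D 0 -> U 0 ->
  (forall x u, D x -> U u -> D (f x u)) ->
  f 0 0 = 0 ->
  l 0 0 = 0 ->
  (forall x u, D x -> U u -> 0 <= l x u) ->
  (forall x u, D x -> U u -> (x, u) != (0, 0) -> 0 < l x u) ->
  X `<=` D ->
  (forall x, X x -> exists2 u, U u & X (f x u)) ->
  (forall x, D x -> V 0%N x = 0) ->
  (forall n x, (1 <= n <= Nt)%N -> D x ->
     [/\ U (mu n x),
         V n x = V n.-1 (f x (mu n x)) + l x (mu n x)
       & forall u, U u -> V n x <= V n.-1 (f x u) + l x u]) ->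
  (forall n x, (Nt < n <= N)%N -> X x ->
     [/\ U (mu n x), X (f x (mu n x)),
         V n x = V n.-1 (f x (mu n x)) + l x (mu n x)
       & forall u, U u -> X (f x u) -> V n x <= V n.-1 (f x u) + l x u]) ->
  (2 <= N)%N -> (1 <= Nt <= N.-1)%N ->
  0 < beta ->
  beta ^+ (N - Nt + 1) < (beta + 1) ^+ (N - Nt - 1) ->
  (forall x, X x -> V Nt.+1 x <= (beta + 1) * V Nt x) ->
  (forall x n, X x -> (Nt < n <= N)%N -> V n x <= (beta + 1) * l x (mu n x)) ->
  forall x, X x ->
    ((1 - beta ^+ (N - Nt + 1) / (beta + 1) ^+ (N - Nt - 1))%:E
       * J_inf f l (mu N) x <= (V N x)%:E)%E.
Proof.
move=> _ _ _ _ fD _ _ l_ge0 _ XD _ V0 unc con N_ge2 /andP[_ NtN] b_gt0 b_ineq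
  V_Nt_step V_le_stage x Xx.
have {NtN} NtN : (Nt < N)%N by lia.
have conN y : X y -> _ := con N y (ltac:(lia) : (Nt < N <= N)%N).
pose cl := cl_traj f (mu N) x.
have Xcl k : X (cl k).
  by elim: k => [|k IHk] //; have [] := conN _ IHk.
apply: (@nneseries_le_of_decrease _ _ (fun k => V N (cl k))).
- rewrite subr_ge0 ler_pdivrMr ?mul1r ?ltW //.
  by apply: exprn_gt0; lra.
- move=> k; have [Umu _ _ _] := conN _ (Xcl k).
  by apply: l_ge0 => //; apply: XD.
- by move=> k; apply: (V_con_ge0 l_ge0 XD fD V0 unc con) => //; lia.
- by move=> k; apply: (V_closed_loop_decrease con NtN (Xcl k)).
Qed.
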